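(* Let $\mathcal{P}$ be a nondegenerate partial geometry $pg(s,t,\alpha)$. If the point graph of $\mathcal{P}$ is $3$-e.c., then $$\alpha(t^2-1)(s-\alpha+1)\ \ge\ \frac{(s+1)(st+\alpha)}{\alpha}+(\alpha-2s)(t+1)-2.$$
   Context: A partial geometry $pg(s,t,\alpha)$ is an incidence structure of points and lines such that any two distinct points lie on at most one common line, every line contains exactly $s+1$ points, every point lies on exactly $t+1$ lines, and for every point $p$ and line $L$ with $p$ not on $L$ there are exactly $\alpha$ lines through $p$ meeting $L$. It is nondegenerate if $s\ge2$, $t\ge1$, $\alpha\ge1$. The point graph has the points as vertices, two distinct points adjacent iff collinear. A graph with vertex set $V$ is $n$-e.c. if for every pair of disjoint subsets $A,B\subseteq V$ with $|A\cup B|=n$ (either may be empty) there is a vertex $z\notin A\cup B$ adjacent to every vertex of $A$ and to no vertex of $B$. *)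

From HB Require Import structures.
From mathcomp Require Import all_boot all_order all_algebra.
Set Implicit Arguments. Unset Strict Implicit. Unset Printing Implicit Defensive.

Definition partial_geometry (Pt Ln : finType) (inc : Pt -> Ln -> bool)
    (s t alpha : nat) : Prop :=
  (forall (p q : Pt) (L M : Ln), p != q ->
      inc p L -> inc q L -> inc p M -> inc q M -> L = M) /\
  (forall L : Ln, #|[set p | inc p L]| = s.+1) /\
  (forall p : Pt, #|[set L | inc p L]| = t.+1) /\
  (forall (p : Pt) (L : Ln), ~~ inc p L ->
      #|[set M | inc p M & [exists q, inc q M && inc q L]]| = alpha).

Definition nondegenerate_pg (s t alpha : nat) : Prop :=
  (2 <= s)%N /\ (1 <= t)%N /\ (1 <= alpha)%N.

Definition pg_adj (Pt Ln : finType) (inc : Pt -> Ln -> bool) (x y : Pt) : bool :=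
  (x != y) && [exists L, inc x L && inc y L].

Definition n_ec (V : finType) (adj : V -> V -> bool) (n : nat) : Prop :=
  forall A B : {set V}, [disjoint A & B] -> #|A :|: B| = n ->
    exists z : V, [/\ z \notin A :|: B,
                      (forall a, a \in A -> adj z a) &
                      (forall b, b \in B -> ~~ adj z b)].

From HB Require Import structures.
From mathcomp Require Import all_boot all_order all_algebra.
From mathcomp Require Import zify ring lra.
Set Implicit Arguments. Unset Strict Implicit. Unset Printing Implicit Defensive.

(* The point graph of pg(s,t,alpha) has valency k = s(t+1), and two
   non-collinear points have mu = alpha(t+1) common neighbours.  Double counting
   the edges between the neighbours and the non-neighbours of a point gives
   alpha v >= (s+1)(st+alpha) for the number v of points.  Now fix non-collinear
   points x, y and let Z be the set of points collinear with neither; covering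
   the complement of Z by x, y and their neighbourhoods gives
   v + mu <= |Z| + 2 + 2k.  By 3-e.c., every z in Z has a common neighbour w
   with x and y; then z lies on one of the t-1 lines through w missing x and y,
   among the s+1-alpha points of that line not collinear with x.  Hence
   |Z| <= mu (t-1)(s+1-alpha), and the three inequalities combine to the
   bound. *)

Section FinsetCounting.
Variables I T : finType.

Lemma leq_card_bigcup (A : {set I}) (F : I -> {set T}) :
  #|\bigcup_(i in A) F i| <= \sum_(i in A) #|F i|.
Proof.
elim/big_rec2: _ => [|i n U _ leUn]; first by rewrite cards0.
by rewrite (leq_trans (leq_card_setU _ _).1) ?leq_add2l.
Qed.

Lemma card_bigcup_disjoint (A : {set I}) (F : I -> {set T}) :
  {in A &, forall i j, i != j -> [disjoint F i & F j]} ->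
  #|\bigcup_(i in A) F i| = \sum_(i in A) #|F i|.
Proof.
move cardA: #|A| => n; elim: n A cardA => [|n IHn] A cardA disjF.
  by move/cards0_eq: cardA => ->; rewrite !big_set0 cards0.
have /set0Pn [a aA] : A != set0 by rewrite -card_gt0 cardA.
rewrite (big_setD1 a aA) [RHS](big_setD1 a aA) /=.
have disj_a : [disjoint F a & \bigcup_(i in A :\ a) F i].
  apply: bigcup_disjoint => i /setD1P [ia iA].
  by apply: disjF => //; rewrite eq_sym.
have [_] := leq_card_setU (F a) (\bigcup_(i in A :\ a) F i).
rewrite disj_a => /eqP ->; congr (_ + _); apply: IHn.
  by move: (cardsD1 a A); rewrite aA cardA add1n => -[].
by move=> i j /setD1P [_ iA] /setD1P [_ jA]; apply: disjF.
Qed.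

Lemma card_sep_sum (A : {set T}) (P : pred T) :
  #|[set x in A | P x]| = \sum_(x in A) P x.
Proof.
rewrite -sum1_card [LHS]big_mkcond [RHS]big_mkcond /=.
by apply: eq_bigr => x _; rewrite inE; case: (x \in A); case: (P x).
Qed.

End FinsetCounting.

Lemma double_count (U W : finType) (A : {set U}) (B : {set W}) (r : U -> W -> bool) :
  \sum_(a in A) #|[set b in B | r a b]| = \sum_(b in B) #|[set a in A | r a b]|.
Proof.
under eq_bigr do rewrite card_sep_sum.
by rewrite exchange_big; apply: eq_bigr => b _; rewrite card_sep_sum.
Qed.

Lemma cards3 (T : finType) (x y z : T) :
  x != y -> x != z -> y != z -> #|[set x; y; z]| = 3.
Proof.
by move=> xy xz yz; rewrite setUC cardsU1 cards2 !inE negb_or xy eq_sym xz eq_sym yz.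
Qed.

Section ExistentiallyClosed.
Variables (V : finType) (adj : V -> V -> bool).
Hypothesis ec3 : n_ec adj 3.

Lemma ec3_common_neighbour x y z : x != y -> x != z -> y != z ->
  exists w, [/\ adj w x, adj w y & adj w z].
Proof.
move=> xy xz yz.
have disj : [disjoint [set x; y; z] & set0] by rewrite -setI_eq0 setI0.
have card3 : #|[set x; y; z] :|: set0| = 3 by rewrite setU0 cards3.
have [w [_ adjw _]] := ec3 disj card3.
by exists w; split; apply: adjw; rewrite !inE eqxx ?orbT.
Qed.

Lemma ec3_nonadjacent_pair : 2 < #|V| -> exists x y, x != y /\ ~~ adj x y.
Proof.
case/card_gt2P => x [y [z [_ [xy yz zx]]]].
have disj : [disjoint set0 & [set x; y; z]] by rewrite -setI_eq0 set0I.
have card3 : #|set0 :|: [set x; y; z]| = 3 by rewrite set0U cards3 // eq_sym.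
have [w [wB _ nadjw]] := ec3 disj card3.
exists w, x; split; last by apply: nadjw; rewrite !inE eqxx.
by apply: contraNneq wB => ->; rewrite !inE eqxx.
Qed.

End ExistentiallyClosed.

Section PartialGeometry.
Variables (Pt Ln : finType) (inc : Pt -> Ln -> bool) (s t alpha : nat).
Hypothesis pg : partial_geometry inc s t alpha.

Let line_unique : forall (p q : Pt) (L M : Ln), p != q ->
  inc p L -> inc q L -> inc p M -> inc q M -> L = M := pg.1.
Let card_line : forall L : Ln, #|[set p | inc p L]| = s.+1 := pg.2.1.
Let card_pencil : forall p : Pt, #|[set L | inc p L]| = t.+1 := pg.2.2.1.
Let card_lines_meeting : forall (p : Pt) (L : Ln), ~~ inc p L ->
  #|[set M | inc p M & [exists q, inc q M && inc q L]]| = alpha := pg.2.2.2.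

Definition collinear (p q : Pt) : bool := [exists L, inc p L && inc q L].
Local Notation adj := (pg_adj inc).

Lemma inc_collinear p q L : inc p L -> inc q L -> collinear p q.
Proof. by move=> pL qL; apply/existsP; exists L; rewrite pL qL. Qed.

Lemma collinearC p q : collinear p q = collinear q p.
Proof. by apply/existsP/existsP => -[L /andP [pL qL]]; exists L; rewrite pL qL. Qed.

Lemma exists_line p : exists L, inc p L.
Proof.
have /card_gt0P [L] : 0 < #|[set L | inc p L]| by rewrite card_pencil.
by rewrite inE; exists L.
Qed.

Lemma collinear_refl p : collinear p p.
Proof. by have [L pL] := exists_line p; exact: (inc_collinear pL pL). Qed.

Lemma noncollinear_neq p q : ~~ collinear p q -> p != q.
Proof. by apply: contraNneq => ->; apply: collinear_refl. Qed.

Lemma pg_adjE p q : adj p q = (p != q) && collinear p q.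
Proof. by []. Qed.

Lemma pg_adjC p q : adj p q = adj q p.
Proof. by rewrite !pg_adjE eq_sym collinearC. Qed.

Lemma noncollinear_line p q L : ~~ collinear p q -> inc q L -> ~~ inc p L.
Proof. by move=> npq qL; apply: contra npq => pL; exact: (inc_collinear pL qL). Qed.

(* The union is disjoint: two lines through [x] share no point other than [x]. *)
Lemma card_bigcup_pencil x (A : {set Ln}) (F : Ln -> {set Pt}) :
  (forall M, M \in A -> inc x M) ->
  (forall M q, M \in A -> q \in F M -> inc q M && (q != x)) ->
  #|\bigcup_(M in A) F M| = \sum_(M in A) #|F M|.
Proof.
move=> xA FA; apply: card_bigcup_disjoint => M M' MA M'A MM'.
rewrite -setI_eq0; apply/set0Pn => -[q /setIP [qM qM']].
have /andP [qM1 qx] := FA M q MA qM; have /andP [qM'1 _] := FA M' q M'A qM'.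
by move: MM'; rewrite (line_unique qx qM1 (xA M MA) qM'1 (xA M' M'A)) eqxx.
Qed.

Lemma card_collinear_on_line x M : ~~ inc x M ->
  #|[set q | inc q M & collinear x q]| = alpha.
Proof.
move=> xM; set A := [set N | inc x N & [exists q, inc q N && inc q M]].
have -> : [set q | inc q M & collinear x q] =
          \bigcup_(N in A) [set q | inc q N & inc q M].
  apply/setP => q; rewrite inE; apply/andP/bigcupP.
    case=> qM /existsP [N /andP [xN qN]]; exists N; last by rewrite inE qN.
    by rewrite inE xN; apply/existsP; exists q; rewrite qN.
  case=> N; rewrite !inE => /andP [xN _] /andP [qN qM].
  by split=> //; exact: (inc_collinear xN qN).
have xA N : N \in A -> inc x N by rewrite inE => /andP [].
rewrite (card_bigcup_pencil xA); last first.
  move=> N q _; rewrite inE => /andP [qN qM]; rewrite qN.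
  by apply: contraNneq xM => <-.
rewrite -(card_lines_meeting xM) -sum1_card; apply: eq_bigr => N.
rewrite inE => /andP [xN /existsP [q /andP [qN qM]]]; apply: (@eq_card1 _ q) => r.
rewrite !inE; apply/andP/eqP => [[rN rM]|-> //].
apply/eqP; apply: contraNT xM => rq.
by rewrite -(line_unique rq rN qN rM qM).
Qed.

Lemma card_noncollinear_on_line x M : ~~ inc x M ->
  #|[set q | inc q M & ~~ collinear x q]| = s.+1 - alpha.
Proof.
move=> xM; rewrite -(card_line M).
rewrite -(cardsID [set q | collinear x q] [set q | inc q M]).
have -> : #|[set q | inc q M] :&: [set q | collinear x q]| = alpha.
  by rewrite -(card_collinear_on_line xM); apply: eq_card => q; rewrite !inE.
by rewrite addKn; apply: eq_card => q; rewrite !inE andbC.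
Qed.

Lemma leq_alpha_line_size x M : ~~ inc x M -> alpha <= s.+1.
Proof.
move=> xM; rewrite -(card_collinear_on_line xM) -(card_line M).
by apply: subset_leq_card; apply/subsetP => q; rewrite !inE => /andP [].
Qed.

Lemma card_points_gt2 (p : Pt) : 2 <= s -> 2 < #|Pt|.
Proof.
move=> s2; have [L _] := exists_line p.
by rewrite (leq_trans _ (max_card [set q | inc q L])) // card_line.
Qed.

Definition far (x : Pt) : {set Pt} := [set z | ~~ collinear x z].

Lemma card_neighbours x : #|[set z | adj x z]| = s * t.+1.
Proof.
have -> : [set z | adj x z] = \bigcup_(L in [set L | inc x L]) ([set p | inc p L] :\ x).
  apply/setP => z; rewrite inE; apply/andP/bigcupP.
    case=> xz /existsP [L /andP [xL zL]].
    by exists L; rewrite !inE ?xL // zL eq_sym xz.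
  case=> L; rewrite !inE => xL /andP [zx zL].
  by split; [rewrite eq_sym | exact: (inc_collinear xL zL)].
have xA L : L \in [set L | inc x L] -> inc x L by rewrite inE.
rewrite (card_bigcup_pencil xA); last by move=> L q _; rewrite !inE andbC.
rewrite -[t.+1](card_pencil x) mulnC -sum_nat_const; apply: eq_bigr => L /xA xL.
by have := cardsD1 x [set p | inc p L]; rewrite card_line inE xL => -[].
Qed.

Lemma card_common_neighbours x y : ~~ collinear x y ->
  #|[set z | adj x z && adj y z]| = alpha * t.+1.
Proof.
move=> nxy.
have -> : [set z | adj x z && adj y z] =
          \bigcup_(M in [set M | inc y M]) [set q | inc q M & collinear x q].
  apply/setP => z; rewrite inE !pg_adjE; apply/idP/bigcupP.
    case/andP=> /andP [_ xz] /andP [_ /existsP [M /andP [yM zM]]].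
    by exists M; rewrite !inE ?yM // zM xz.
  case=> M; rewrite !inE => yM /andP [zM xz].
  rewrite xz (inc_collinear yM zM) !andbT.
  apply/andP; split; first by apply: contraTneq zM => <-; apply: noncollinear_line nxy yM.
  by apply: contraNneq nxy => ->.
have yA M : M \in [set M | inc y M] -> inc y M by rewrite inE.
rewrite (card_bigcup_pencil yA); last first.
  move=> M q _; rewrite inE => /andP [-> xq] /=.
  by apply: contraNneq nxy => <-.
rewrite -[t.+1](card_pencil y) mulnC -sum_nat_const; apply: eq_bigr => M /yA yM.
exact/card_collinear_on_line/(noncollinear_line nxy yM).
Qed.

Lemma leq_card_far_neighbours x y : adj x y ->
  t * (s.+1 - alpha) <= #|[set z in far x | adj y z]|.
Proof.
case/andP=> xy /existsP [L /andP [xL yL]].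
set A := [set M | inc y M] :\ L.
have yA M : M \in A -> inc y M by case/setD1P; rewrite inE.
have xA M : M \in A -> ~~ inc x M.
  case/setD1P=> ML; rewrite inE => yM; apply: contra ML => xM.
  by rewrite (line_unique xy xM yM xL yL).
have cardA : #|A| = t.
  by have := cardsD1 L [set M | inc y M]; rewrite card_pencil inE yL => -[].
apply: (@leq_trans #|\bigcup_(M in A) [set q | inc q M & ~~ collinear x q]|).
  rewrite (card_bigcup_pencil yA); last first.
    move=> M q _; rewrite inE => /andP [-> xq] /=.
    by apply: contraNneq xq => ->; exact: (inc_collinear xL yL).
  rewrite -cardA -sum_nat_const; apply/eq_leq/eq_bigr => M /xA xM.
  by rewrite card_noncollinear_on_line.
apply/subset_leq_card/subsetP => z /bigcupP [M /yA yM].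
rewrite !inE => /andP [zM xz]; rewrite xz pg_adjE (inc_collinear yM zM) andbT.
by apply: contraNneq xz => <-; exact: (inc_collinear xL yL).
Qed.

Lemma card_points_split x : #|Pt| = (s * t.+1 + #|far x|).+1.
Proof.
rewrite -cardsT (cardsD1 x) in_setT.
rewrite -(cardsID [set z | collinear x z] (_ :\ x)).
rewrite -(card_neighbours x) add1n; congr (_ + _).+1; apply: eq_card => z.
  by rewrite !inE pg_adjE andbT eq_sym.
by rewrite !inE andbT andb_idr // => /noncollinear_neq; rewrite eq_sym.
Qed.

Lemma leq_card_points (x : Pt) :
  alpha <= s.+1 -> s.+1 * (s * t + alpha) <= alpha * #|Pt|.
Proof.
move=> alpha_le.
set N := [set z | adj x z].
have lower :
    #|N| * (t * (s.+1 - alpha)) <= \sum_(y in N) #|[set z in far x | adj y z]|.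
  rewrite -sum_nat_const; apply: leq_sum => y; rewrite inE.
  exact: leq_card_far_neighbours.
have upper :
    \sum_(z in far x) #|[set y in N | adj y z]| <= #|far x| * (alpha * t.+1).
  rewrite -sum_nat_const; apply: leq_sum => z; rewrite inE => xz.
  rewrite -(card_common_neighbours xz); apply/subset_leq_card/subsetP => y.
  by rewrite !inE [adj z y]pg_adjC.
have := leq_trans lower (leq_trans (eq_leq (double_count _ _ _)) upper).
rewrite card_neighbours (card_points_split x); move: #|far x| => f bound.
have {}bound : s * t * (s.+1 - alpha) <= f * alpha.
  by rewrite -(leq_pmul2r (ltn0Sn t)); nia.
nia.
Qed.

Lemma leq_card_points_far2 x y : ~~ collinear x y ->
  #|Pt| + alpha * t.+1 <= #|far x :&: far y| + 2 + 2 * (s * t.+1).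
Proof.
move=> nxy; set Nx := [set z | adj x z]; set Ny := [set z | adj y z].
have cover : [set: Pt] \subset (far x :&: far y) :|: [set x; y] :|: (Nx :|: Ny).
  apply/subsetP => z _; rewrite !inE !pg_adjE.
  have [->|_] := eqVneq z x; first by rewrite /= !orbT.
  have [->|_] := eqVneq z y; first by rewrite /= !orbT.
  by case: (collinear x z); case: (collinear y z).
have cardN : #|Nx :|: Ny| + alpha * t.+1 = 2 * (s * t.+1).
  rewrite -(card_common_neighbours nxy) mul2n -addnn -{1}(card_neighbours x).
  rewrite -(card_neighbours y) -(cardsUI Nx Ny).
  by congr (_ + _); apply: eq_card => z; rewrite !inE.
rewrite -cardsT -cardN addnA leq_add2r.
apply: (leq_trans (subset_leq_card cover)); apply: (leq_trans (leq_card_setU _ _).1).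
rewrite leq_add2r; apply: (leq_trans (leq_card_setU _ _).1).
by rewrite cards2 leq_add2l; case: (x != y).
Qed.

Lemma leq_card_lines_avoiding w x y : adj x w -> adj y w -> ~~ collinear x y ->
  #|[set M | [&& inc w M, ~~ inc x M & ~~ inc y M]]| <= t.-1.
Proof.
case/andP=> _ /existsP [Lx /andP [xLx wLx]].
case/andP=> _ /existsP [Ly /andP [yLy wLy]] nxy.
have LxLy : Lx != Ly.
  by apply: contraNneq nxy => LxE; rewrite LxE in xLx; exact: (inc_collinear xLx yLy).
have := cardsD1 Lx [set M | inc w M]; rewrite card_pencil inE wLx add1n => -[->].
rewrite (cardsD1 Ly (_ :\ Lx)) !inE [Ly == Lx]eq_sym LxLy wLy add1n /=.
apply/subset_leq_card/subsetP => M; rewrite !inE => /and3P [wM xM yM].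
rewrite wM andbT; apply/andP; split.
  by apply: contraNneq yM => ->.
by apply: contraNneq xM => ->.
Qed.

Lemma leq_card_far2 x y : n_ec adj 3 -> ~~ collinear x y ->
  #|far x :&: far y| <= alpha * t.+1 * (t.-1 * (s.+1 - alpha)).
Proof.
move=> ec3 nxy.
set C := [set w | adj x w && adj y w].
set avoiding := fun w => [set M | [&& inc w M, ~~ inc x M & ~~ inc y M]].
have cover : far x :&: far y \subset
    \bigcup_(w in C) \bigcup_(M in avoiding w) [set q | inc q M & ~~ collinear x q].
  apply/subsetP => z; rewrite !inE => /andP [xz yz].
  have [w [wx wy wz]] := ec3_common_neighbour ec3 (noncollinear_neq nxy)
    (noncollinear_neq xz) (noncollinear_neq yz).
  apply/bigcupP; exists w; first by rewrite inE ![adj _ w]pg_adjC wx wy.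
  case/andP: wz => _ /existsP [M /andP [wM zM]].
  apply/bigcupP; exists M; last by rewrite inE zM xz.
  by rewrite inE wM (noncollinear_line xz zM) (noncollinear_line yz zM).
apply: (leq_trans (subset_leq_card cover)); apply: (leq_trans (leq_card_bigcup _ _)).
rewrite -(card_common_neighbours nxy) -sum_nat_const; apply: leq_sum => w.
rewrite inE => /andP [xw yw]; apply: (leq_trans (leq_card_bigcup _ _)).
rewrite (eq_bigr (fun _ => s.+1 - alpha)); last first.
  by move=> M; rewrite inE => /and3P [_ xM _]; apply: card_noncollinear_on_line.
by rewrite sum_nat_const leq_mul2r leq_card_lines_avoiding ?orbT.
Qed.

End PartialGeometry.

Import Order.TTheory GRing.Theory Num.Theory.
Local Open Scope ring_scope.

Lemma bound_of_counts (s t a v z : nat) :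
  (0 < a)%N -> (0 < t)%N -> (a <= s.+1)%N ->
  (s.+1 * (s * t + a) <= a * v)%N ->
  (v + a * t.+1 <= z + 2 + 2 * (s * t.+1))%N ->
  (z <= a * t.+1 * (t.-1 * (s.+1 - a)))%N ->
  a%:Q * (t%:Q ^+ 2 - 1) * (s%:Q - a%:Q + 1) >=
    (s%:Q + 1) * (s%:Q * t%:Q + a%:Q) / a%:Q + (a%:Q - 2 * s%:Q) * (t%:Q + 1) - 2.
Proof.
move=> a_gt0 t_gt0 a_le; rewrite -!(ler_nat rat) -!pmulrn.
rewrite !(natrM, natrD) natrB // -subn1 natrB // -!natr1 => hv hz_low hz_up.
have hv' : (s%:R + 1) * (s%:R * t%:R + a%:R) / a%:R <= v%:R :> rat.
  by rewrite ler_pdivrMr ?ltr0n // [_ * a%:R]mulrC.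
have -> : a%:R * (t%:R ^+ 2 - 1) * (s%:R - a%:R + 1) =
  a%:R * (t%:R + 1) * ((t%:R - 1) * (s%:R + 1 - a%:R)) :> rat by ring.
lra.
Qed.

Theorem mainTheorem8 (Pt Ln : finType) (inc : Pt -> Ln -> bool)
    (s t alpha : nat) (p0 : Pt) :
  partial_geometry inc s t alpha ->
  nondegenerate_pg s t alpha ->
  n_ec (pg_adj inc) 3 ->
  alpha%:Q * (t%:Q ^+ 2 - 1) * (s%:Q - alpha%:Q + 1) >=
    (s%:Q + 1) * (s%:Q * t%:Q + alpha%:Q) / alpha%:Q
    + (alpha%:Q - 2 * s%:Q) * (t%:Q + 1) - 2.
Proof.
move=> pg [s_ge2 [t_gt0 alpha_gt0]] ec3.
have [x [y [xy nadj]]] := ec3_nonadjacent_pair ec3 (card_points_gt2 pg p0 s_ge2).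
have nxy : ~~ collinear inc x y by move: nadj; rewrite pg_adjE xy.
have [L yL] := exists_line pg y.
have alpha_le := leq_alpha_line_size pg (noncollinear_line nxy yL).
apply: (@bound_of_counts s t alpha #|Pt| #|far inc x :&: far inc y|) => //.
- exact: (leq_card_points pg x alpha_le).
- exact: (leq_card_points_far2 pg nxy).
- exact: (leq_card_far2 pg ec3 nxy).
Qed.
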